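(* Let $\mathcal{M}=[0,S)\times_h\mathbb{S}^{N-1}$ be a model manifold, let $R_0\in(0,S)$, $f\in C^0([R_0,S))$, $\varphi\in C^1((R_0,S))$, $\kappa\in C^0((R_0,S))$, and for $r\in(R_0,S)$, $c\in\mathbb{R}$ let $$w(r,c)=\frac{1}{h(r)^{N-1}\int_{R_0}^r\frac{ds}{h(s)^{N-1}}}\left(c-\int_{R_0}^r\int_s^r\Big(\frac{h(t)}{h(s)}\Big)^{N-1}f(t)\,dt\,ds\right).$$ Suppose that $\varphi'(r)-w(r,\varphi(r))\ge0$ for all $r\in(R_0,S)$, and that $$h(r_2)^{N-1}\kappa(r_2)-h(r_1)^{N-1}\kappa(r_1)+\int_{r_1}^{r_2}h(t)^{N-1}f(t)\,dt\le0$$ for all $r_1,r_2\in(R_0,S)$ with $r_1<r_2$. Then for every $r_0\in(R_0,S)$ with $w(r_0,\varphi(r_0))-\kappa(r_0)=0$ we have $w(r,\varphi(r))-\kappa(r)\le0$ for all $r\in(R_0,r_0]$.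
   Context: Model manifold data: $N\ge2$, $S\in(0,+\infty]$, $h\in C^\infty([0,S))$ with $h>0$ on $(0,S)$, $h'(0)=1$, $h^{(2k)}(0)=0$ for all $k\ge0$. *)

From Stdlib Require Import Reals.
From Coquelicot Require Import Coquelicot.
Open Scope R_scope.

Definition in_Ico (a : R) (b : Rbar) (x : R) : Prop := a <= x /\ Rbar_lt (Finite x) b.
Definition in_Ioo (a : R) (b : Rbar) (x : R) : Prop := a < x /\ Rbar_lt (Finite x) b.

Definition cont_on (D : R -> Prop) (f : R -> R) : Prop :=
  forall x, D x -> filterlim f (within D (locally x)) (locally (f x)).

Definition C1_on (D : R -> Prop) (f : R -> R) : Prop :=
  forall x, D x -> ex_derive f x /\ continuous (Derive f) x.

(* Model manifold data: N >= 2, S in (0,+oo], h in C^oo([0,S)) (one-sided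
   derivatives at 0, given by the family Dh: Dh n = n-th derivative on [0,S)),
   h > 0 on (0,S), h'(0) = 1, h^(2k)(0) = 0 for all k. *)
Definition model_manifold (N : nat) (S : Rbar) (h : R -> R) : Prop :=
  (2 <= N)%nat /\ Rbar_lt (Finite 0) S /\
  (forall x, in_Ioo 0 S x -> 0 < h x) /\
  exists Dh : nat -> R -> R,
    (forall x, in_Ico 0 S x -> Dh O x = h x) /\
    (forall n x, in_Ico 0 S x ->
       filterlim (fun y => (Dh n y - Dh n x) / (y - x))
         (within (fun y => in_Ico 0 S y /\ y <> x) (locally x))
         (locally (Dh (Datatypes.S n) x))) /\
    Dh 1%nat 0 = 1 /\
    (forall k, Dh (2 * k)%nat 0 = 0).

Definition w (N : nat) (h : R -> R) (R0 : R) (f : R -> R) (r c : R) : R :=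
  / (h r ^ (N - 1) * RInt (fun s => / h s ^ (N - 1)) R0 r) *
  (c - RInt (fun s => RInt (fun t => (h t / h s) ^ (N - 1) * f t) s r) R0 r).

(* Write H = h^(N-1), I(r) = int_R0^r 1/H, F(r) = int_R0^r H f and
   K(r) = int_R0^r F/H. The inner integral in w is (F(r) - F(s))/H(s), so the
   double integral is F I - K and H(r) w(r,c) = (c + K(r))/I(r) - F(r). Hence
   v = (phi + K)/I has v' = (phi' - w(., phi))/I >= 0, and for r <= r0
     H(r) (w - kappa)(r) = v(r) - F(r) - (H kappa)(r)
                        <= v(r0) - F(r) - (H kappa)(r)
                         = (H kappa)(r0) + F(r0) - F(r) - (H kappa)(r) <= 0
   by w(r0, phi(r0)) = kappa(r0) and the flux hypothesis. *)

From Stdlib Require Import Reals Lra.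
From Coquelicot Require Import Coquelicot.
Open Scope R_scope.

Lemma filterlim_within_image {T U : Type} (F : (T -> Prop) -> Prop) {FF : Filter F}
  (G : (U -> Prop) -> Prop) (D : U -> Prop) (g : T -> U) :
  filterlim g F G -> F (fun x => D (g x)) -> filterlim g F (within D G).
Proof.
intros Hg HD P HP; unfold filtermap.
apply (filter_imp (fun x => D (g x) /\ (D (g x) -> P (g x)))).
- intros x [Dx HPx]; exact (HPx Dx).
- exact (filter_and _ _ HD (Hg _ HP)).
Qed.

Lemma cont_on_subset (D D' : R -> Prop) (g : R -> R) :
  (forall x, D' x -> D x) -> cont_on D g -> cont_on D' g.
Proof.
intros Hsub Hg x Hx P HP; unfold filtermap, within.
apply (filter_imp (fun y => D y -> P (g y))); [auto|].
exact (Hg x (Hsub x Hx) P HP).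
Qed.

Lemma cont_within_of_diff_quot (D : R -> Prop) (g : R -> R) (x l : R) :
  filterlim (fun y => (g y - g x) / (y - x))
    (within (fun y => D y /\ y <> x) (locally x)) (locally l) ->
  filterlim g (within D (locally x)) (locally (g x)).
Proof.
intros Hq.
set (D' := fun y => D y /\ y <> x) in Hq.
assert (Hincr : filterlim (fun y => y - x) (within D' (locally x)) (locally 0)).
{ apply (filterlim_filter_le_1 _ (@filter_le_within _ (locally x) _ D')).
  rewrite <- (Rminus_diag_eq x x) by reflexivity.
  exact (continuous_minus (fun y => y) (fun _ => x) x (continuous_id x) (continuous_const x x)). }
assert (Hprod : filterlim (fun y => (y - x) * ((g y - g x) / (y - x)))
                  (within D' (locally x)) (locally 0)).
{ rewrite <- (Rmult_0_l l). exact (filterlim_comp_2 _ _ _ Hincr Hq (filterlim_mult 0 l)). }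
assert (Hlim : filterlim g (within D' (locally x)) (locally (g x))).
{ apply (filterlim_within_ext _ (fun y => g x + (y - x) * ((g y - g x) / (y - x)))).
  { intros y [_ Hy]. field. contradict Hy. lra. }
  assert (Hsum := filterlim_comp_2 _ _ _ (filterlim_const (g x)) Hprod (filterlim_plus (g x) 0)).
  rewrite Rplus_0_r in Hsum. exact Hsum. }
intros P HP; unfold filtermap, within.
apply (filter_imp (fun y => D' y -> P (g y))); [|exact (Hlim P HP)].
intros y HPy Dy. destruct (Req_dec y x) as [->|Hne].
- exact (locally_singleton _ _ HP).
- exact (HPy (conj Dy Hne)).
Qed.

Lemma model_manifold_cont_on (N : nat) (S : Rbar) (h : R -> R) :
  model_manifold N S h -> cont_on (in_Ico 0 S) h.
Proof.
intros [_ [_ [_ [Dh [HDh0 [HDh _]]]]]] x Hx.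
rewrite <- (HDh0 x Hx).
apply (filterlim_within_ext _ (Dh O)); [exact HDh0|].
exact (cont_within_of_diff_quot _ _ x _ (HDh O x Hx)).
Qed.

Lemma model_manifold_pos (N : nat) (S : Rbar) (h : R -> R) (a x : R) :
  model_manifold N S h -> 0 < a -> in_Ico a S x -> 0 < h x.
Proof.
intros [_ [_ [Hpos _]]] Ha [Hax HxS]. apply Hpos. split; [lra | exact HxS].
Qed.

Lemma Rabs_Rmax_l_sub (a x y : R) : Rabs (Rmax y a - Rmax x a) <= Rabs (y - x).
Proof. unfold Rmax; destruct (Rle_dec y a), (Rle_dec x a); split_Rabs; lra. Qed.

Lemma continuous_Rmax_l (a x : R) : continuous (fun y => Rmax y a) x.
Proof.
apply filterlim_locally; intros eps. exists eps; intros y Hy.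
exact (Rle_lt_trans _ _ _ (Rabs_Rmax_l_sub a x y) Hy).
Qed.

Lemma in_Ico_Rmax (a : R) (S : Rbar) (y : R) :
  Rbar_lt a S -> Rbar_lt y S -> in_Ico a S (Rmax y a).
Proof.
intros Ha Hy. split; [apply Rmax_r|]. unfold Rmax; destruct (Rle_dec y a); assumption.
Qed.

Definition cont_below (S : Rbar) (g : R -> R) : Prop :=
  forall x : R, Rbar_lt x S -> continuous g x.

(* Coquelicot's integrability and FTC lemmas need continuity at every point of
   a segment; a function continuous only on [a, S) is frozen at [g a] to the
   left of [a], which makes it continuous on (-oo, S) and changes no integral
   over [a, S). *)
Definition clamp (a : R) (g : R -> R) (x : R) : R := g (Rmax x a).

Lemma clamp_id (a : R) (g : R -> R) (x : R) : a <= x -> clamp a g x = g x.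
Proof. intros Hx. unfold clamp. rewrite Rmax_left; [reflexivity | exact Hx]. Qed.

Lemma cont_below_clamp (a : R) (S : Rbar) (g : R -> R) :
  Rbar_lt a S -> cont_on (in_Ico a S) g -> cont_below S (clamp a g).
Proof.
intros Ha Hg x Hx. unfold clamp.
apply (filterlim_comp _ _ _ (fun y => Rmax y a) g _ (within (in_Ico a S) (locally (Rmax x a)))).
- refine (filterlim_within_image _ _ _ _ (continuous_Rmax_l a x) _).
  assert (HxS : locally x (fun y : R => Rbar_lt y S)) by exact (open_Rbar_lt' x S Hx).
  apply (filter_imp _ _ (fun y => in_Ico_Rmax a S y Ha) HxS).
- exact (Hg _ (in_Ico_Rmax a S x Ha Hx)).
Qed.

Lemma continuous_pow (g : R -> R) (n : nat) (x : R) :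
  continuous g x -> continuous (fun y => g y ^ n) x.
Proof.
intros Hg. induction n as [|n IH]; simpl.
- apply continuous_const.
- exact (continuous_mult g (fun y => g y ^ n) x Hg IH).
Qed.

Lemma cont_below_clamp_model_weight (N n : nat) (S : Rbar) (h : R -> R) (a : R) :
  model_manifold N S h -> 0 <= a -> Rbar_lt a S ->
  cont_below S (clamp a (fun x => h x ^ n)).
Proof.
intros HM Ha HaS x Hx. apply continuous_pow.
refine (cont_below_clamp a S h HaS _ x Hx).
apply (cont_on_subset (in_Ico 0 S)); [|exact (model_manifold_cont_on N S h HM)].
intros y [Hy HyS]. split; [lra | exact HyS].
Qed.

Lemma clamp_model_weight_pos (N n : nat) (S : Rbar) (h : R -> R) (a x : R) :
  model_manifold N S h -> 0 < a -> Rbar_lt a S -> Rbar_lt x S ->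
  0 < clamp a (fun y => h y ^ n) x.
Proof.
intros HM Ha HaS Hx. apply pow_lt, (model_manifold_pos N S h a _ HM Ha).
exact (in_Ico_Rmax a S x HaS Hx).
Qed.

Section IntegralsBelow.

Variables (S : Rbar) (g : R -> R).
Hypothesis g_cont : cont_below S g.

Lemma ex_RInt_below (a b : R) : Rbar_lt a S -> Rbar_lt b S -> ex_RInt g a b.
Proof.
intros Ha Hb. apply (ex_RInt_continuous (V := R_CompleteNormedModule)).
intros z [_ Hz]. apply g_cont.
exact (Rbar_le_lt_trans z (Rmax a b) S Hz (Rmax_case a b (fun m => Rbar_lt m S) Ha Hb)).
Qed.

Lemma RInt_Chasles_below (a b c : R) : Rbar_lt a S -> Rbar_lt b S -> Rbar_lt c S ->
  RInt g a c - RInt g a b = RInt g b c.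
Proof.
intros Ha Hb Hc.
rewrite <- (RInt_Chasles (V := R_CompleteNormedModule) g a b c) by (apply ex_RInt_below; assumption).
unfold plus; simpl. ring.
Qed.

Lemma is_derive_RInt_below (a x : R) : Rbar_lt a S -> Rbar_lt x S ->
  is_derive (fun b => RInt g a b) x (g x).
Proof.
intros Ha Hx. apply (is_derive_RInt (V := R_NormedModule) g _ a x); [|exact (g_cont x Hx)].
assert (HxS : locally x (fun y : R => Rbar_lt y S)) by exact (open_Rbar_lt' x S Hx).
apply (filter_imp _ _ (fun y Hy => RInt_correct _ _ _ (ex_RInt_below a y Ha Hy)) HxS).
Qed.

Lemma cont_below_RInt (a : R) : Rbar_lt a S -> cont_below S (fun b => RInt g a b).
Proof.
intros Ha x Hx. apply (ex_derive_continuous (V := R_NormedModule)).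
exists (g x). exact (is_derive_RInt_below a x Ha Hx).
Qed.

End IntegralsBelow.

Lemma RInt_scal_minus (c : R) (g1 g2 : R -> R) (a b : R) :
  ex_RInt g1 a b -> ex_RInt g2 a b ->
  RInt (fun x => c * g1 x - g2 x) a b = c * RInt g1 a b - RInt g2 a b.
Proof.
intros Hg1 Hg2. apply is_RInt_unique.
exact (is_RInt_minus (V := R_NormedModule) _ _ a b _ _
         (is_RInt_scal _ a b c _ (RInt_correct _ _ _ Hg1)) (RInt_correct _ _ _ Hg2)).
Qed.

Lemma Rle_of_derive_nonneg (g dg : R -> R) (a b : R) : a <= b ->
  (forall x, a <= x <= b -> is_derive g x (dg x) /\ 0 <= dg x) -> g a <= g b.
Proof.
intros Hab Hg.
destruct (MVT_gen g a b dg) as [c [Hc Hgc]];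
  rewrite ?Rmin_left, ?Rmax_right in * by exact Hab.
- intros x Hx. apply Hg. lra.
- intros x Hx. apply continuity_pt_filterlim, (ex_derive_continuous (V := R_NormedModule)).
  exists (dg x). apply Hg, Hx.
- assert (Hdg := proj2 (Hg c Hc)). nra.
Qed.

Definition w_weighted (H : R -> R) (a : R) (f : R -> R) (r c : R) : R :=
  / (H r * RInt (fun s => / H s) a r) *
  (c - RInt (fun s => RInt (fun t => H t / H s * f t) s r) a r).

Section WeightedComparison.

Variables (S : Rbar) (a : R) (H f : R -> R).
Hypotheses (Ha : Rbar_lt a S) (H_cont : cont_below S H)
  (H_pos : forall x : R, Rbar_lt x S -> 0 < H x) (f_cont : cont_below S f).

Let I (x : R) : R := RInt (fun s => / H s) a x.
Let F (x : R) : R := RInt (fun t => H t * f t) a x.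
Let K (x : R) : R := RInt (fun s => F s / H s) a x.

Let inv_H_cont : cont_below S (fun s => / H s).
Proof. intros x Hx. apply continuous_Rinv_comp; [exact (H_cont x Hx) | exact (Rgt_not_eq _ _ (H_pos x Hx))]. Qed.

Let Hf_cont : cont_below S (fun t => H t * f t).
Proof. intros x Hx. exact (continuous_mult H f x (H_cont x Hx) (f_cont x Hx)). Qed.

Let F_div_H_cont : cont_below S (fun s => F s / H s).
Proof.
intros x Hx.
exact (continuous_mult F (fun s => / H s) x (cont_below_RInt S _ Hf_cont a Ha x Hx) (inv_H_cont x Hx)).
Qed.

Lemma RInt_inv_pos (x : R) : a < x -> Rbar_lt x S -> 0 < I x.
Proof.
intros Hax Hx.
assert (HyS : forall y, a <= y <= x -> Rbar_lt y S)
  by (intros y Hy; exact (Rbar_le_lt_trans y x S (proj2 Hy) Hx)).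
apply RInt_gt_0; [exact Hax | |].
- intros y Hy. apply Rinv_0_lt_compat, H_pos, HyS. lra.
- intros y Hy. apply inv_H_cont, HyS. lra.
Qed.

Lemma RInt_kernel (s r : R) : Rbar_lt s S -> Rbar_lt r S ->
  RInt (fun t => H t / H s * f t) s r = (F r - F s) / H s.
Proof.
intros Hs Hr.
rewrite (RInt_ext _ (fun t => scal (/ H s) (H t * f t)))
  by (intros t _; unfold scal; simpl; unfold mult; simpl; unfold Rdiv; ring).
rewrite (RInt_scal (V := R_CompleteNormedModule)) by exact (ex_RInt_below S _ Hf_cont s r Hs Hr).
unfold F. rewrite (RInt_Chasles_below S _ Hf_cont a s r Ha Hs Hr).
unfold scal; simpl; unfold mult; simpl; unfold Rdiv. ring.
Qed.

Lemma RInt_RInt_kernel (r : R) : a <= r -> Rbar_lt r S ->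
  RInt (fun s => RInt (fun t => H t / H s * f t) s r) a r = F r * I r - K r.
Proof.
intros Har Hr.
rewrite (RInt_ext _ (fun s => F r * / H s - F s / H s)).
- exact (RInt_scal_minus _ _ _ _ _ (ex_RInt_below S _ inv_H_cont a r Ha Hr)
           (ex_RInt_below S _ F_div_H_cont a r Ha Hr)).
- intros s Hs. rewrite Rmin_left, Rmax_right in Hs by exact Har.
  rewrite RInt_kernel by (exact Hr || exact (Rbar_le_lt_trans s r S (Rlt_le _ _ (proj2 Hs)) Hr)).
  change ((F r - F s) / H s = F r * / H s - F s / H s). unfold Rdiv; ring.
Qed.

Lemma w_weighted_eq (r c : R) : a < r -> Rbar_lt r S ->
  H r * w_weighted H a f r c = (c + K r) / I r - F r.
Proof.
intros Har Hr. unfold w_weighted.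
rewrite RInt_RInt_kernel by (lra || exact Hr).
change (RInt (fun s => / H s) a r) with (I r).
assert (HHr := H_pos r Hr). assert (HIr := RInt_inv_pos r Har Hr).
field. split; apply Rgt_not_eq; assumption.
Qed.

Lemma is_derive_potential (phi : R -> R) (x dphi : R) : a < x -> Rbar_lt x S ->
  is_derive phi x dphi ->
  is_derive (fun y => (phi y + K y) / I y) x ((dphi - w_weighted H a f x (phi x)) / I x).
Proof.
intros Hax Hx Hphi.
assert (HHx := H_pos x Hx). assert (HIx := RInt_inv_pos x Hax Hx).
assert (Hw := w_weighted_eq x (phi x) Hax Hx).
assert (HK : is_derive K x (F x / H x)) by exact (is_derive_RInt_below S _ F_div_H_cont a x Ha Hx).
assert (HI : is_derive I x (/ H x)) by exact (is_derive_RInt_below S _ inv_H_cont a x Ha Hx).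
replace ((dphi - w_weighted H a f x (phi x)) / I x)
  with (((dphi + F x / H x) * I x - (phi x + K x) * / H x) / I x ^ 2).
- exact (is_derive_div (fun y => phi y + K y) I x _ _
           (is_derive_plus phi K x _ _ Hphi HK) HI (Rgt_not_eq _ _ HIx)).
- replace (w_weighted H a f x (phi x)) with (((phi x + K x) / I x - F x) / H x)
    by (rewrite <- Hw; field; lra).
  field. split; lra.
Qed.

Lemma w_weighted_le_of_flux (phi kappa : R -> R) (r r0 : R) :
  a < r <= r0 -> Rbar_lt r0 S ->
  (forall x, r <= x <= r0 -> ex_derive phi x /\ w_weighted H a f x (phi x) <= Derive phi x) ->
  H r0 * kappa r0 - H r * kappa r + RInt (fun t => H t * f t) r r0 <= 0 ->
  w_weighted H a f r0 (phi r0) = kappa r0 ->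
  w_weighted H a f r (phi r) <= kappa r.
Proof.
intros Hr Hr0 Hphi Hflux Hr0_eq.
assert (HxS : forall x, x <= r0 -> Rbar_lt x S)
  by (intros x Hx; exact (Rbar_le_lt_trans x r0 S Hx Hr0)).
assert (HrS := HxS r (proj2 Hr)).
assert (Hmono : (phi r + K r) / I r <= (phi r0 + K r0) / I r0).
{ apply (Rle_of_derive_nonneg (fun y => (phi y + K y) / I y)
           (fun x => (Derive phi x - w_weighted H a f x (phi x)) / I x)); [lra|].
  intros x Hx. destruct (Hphi x Hx) as [Hd Hle].
  assert (HIx := RInt_inv_pos x ltac:(lra) (HxS x (proj2 Hx))).
  split.
  - exact (is_derive_potential phi x _ ltac:(lra) (HxS x (proj2 Hx)) (Derive_correct _ _ Hd)).
  - apply Rdiv_le_0_compat; lra. }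
rewrite <- (RInt_Chasles_below S _ Hf_cont a r r0 Ha HrS Hr0) in Hflux.
assert (Hwr := w_weighted_eq r (phi r) ltac:(lra) HrS).
assert (Hwr0 := w_weighted_eq r0 (phi r0) ltac:(lra) Hr0).
rewrite Hr0_eq in Hwr0.
apply (Rmult_le_reg_l (H r)); [exact (H_pos r HrS)|].
fold (F r) (F r0) in Hflux. lra.
Qed.

End WeightedComparison.

Lemma w_eq_w_weighted_clamp (N : nat) (h : R -> R) (a : R) (f : R -> R) (r c : R) :
  a <= r -> w N h a f r c = w_weighted (clamp a (fun x => h x ^ (N - 1))) a (clamp a f) r c.
Proof.
intros Har. unfold w, w_weighted, clamp.
assert (Hclamp : forall x, a <= x -> Rmax x a = x) by (intros x Hx; exact (Rmax_left x a Hx)).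
rewrite (Hclamp r Har).
assert (HI : RInt (fun s => / h s ^ (N - 1)) a r = RInt (fun s => / h (Rmax s a) ^ (N - 1)) a r).
{ apply RInt_ext. intros s Hs. rewrite Rmin_left, Rmax_right in Hs by exact Har.
  rewrite Hclamp by lra. reflexivity. }
assert (HJ : RInt (fun s => RInt (fun t => (h t / h s) ^ (N - 1) * f t) s r) a r =
             RInt (fun s => RInt (fun t => h (Rmax t a) ^ (N - 1) / h (Rmax s a) ^ (N - 1)
                                            * f (Rmax t a)) s r) a r).
{ apply RInt_ext. intros s Hs. rewrite Rmin_left, Rmax_right in Hs by exact Har.
  rewrite (Hclamp s) by lra.
  apply RInt_ext. intros t Ht. rewrite Rmin_left, Rmax_right in Ht by lra.
  rewrite Hclamp by lra. unfold Rdiv. rewrite Rpow_mult_distr, pow_inv. reflexivity. }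
rewrite HI, HJ. reflexivity.
Qed.

Lemma RInt_clamp (a : R) (g : R -> R) (b c : R) :
  a <= b -> a <= c -> RInt (clamp a g) b c = RInt g b c.
Proof.
intros Hb Hc. apply RInt_ext. intros x Hx.
apply clamp_id. apply (Rle_trans _ (Rmin b c)); [now apply Rmin_glb | lra].
Qed.

Theorem proposition3p4 (N : nat) (Smax : Rbar) (h : R -> R)
  (R0 : R) (f phi kappa : R -> R) :
  model_manifold N Smax h ->
  0 < R0 -> Rbar_lt (Finite R0) Smax ->
  cont_on (in_Ico R0 Smax) f ->
  C1_on (in_Ioo R0 Smax) phi ->
  cont_on (in_Ioo R0 Smax) kappa ->
  (forall r, in_Ioo R0 Smax r -> Derive phi r - w N h R0 f r (phi r) >= 0) ->
  (forall r1 r2, in_Ioo R0 Smax r1 -> in_Ioo R0 Smax r2 -> r1 < r2 ->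
     h r2 ^ (N - 1) * kappa r2 - h r1 ^ (N - 1) * kappa r1
     + RInt (fun t => h t ^ (N - 1) * f t) r1 r2 <= 0) ->
  forall r0, in_Ioo R0 Smax r0 ->
  w N h R0 f r0 (phi r0) - kappa r0 = 0 ->
  forall r, R0 < r <= r0 -> w N h R0 f r (phi r) - kappa r <= 0.
Proof.
intros HM HR0 HR0S Hf Hphi _ Hw Hflux r0 [Hr0 Hr0S] Hwr0 r Hr.
destruct (Rle_lt_or_eq_dec r r0 (proj2 Hr)) as [Hlt | ->]; [|lra].
assert (Hin : forall x, R0 < x <= r0 -> in_Ioo R0 Smax x)
  by (intros x Hx; split; [lra | exact (Rbar_le_lt_trans x r0 Smax (proj2 Hx) Hr0S)]).
rewrite w_eq_w_weighted_clamp in Hwr0 |- * by lra.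
apply Rle_minus.
apply (w_weighted_le_of_flux Smax R0 _ _ HR0S
         (cont_below_clamp_model_weight N _ Smax h R0 HM (Rlt_le _ _ HR0) HR0S)
         (fun x => clamp_model_weight_pos N _ Smax h R0 x HM HR0 HR0S)
         (cont_below_clamp R0 Smax f HR0S Hf) phi kappa r r0 Hr Hr0S).
- intros x Hx. destruct (Hphi x (Hin x ltac:(lra))) as [Hd _]. split; [exact Hd|].
  rewrite <- w_eq_w_weighted_clamp by lra. generalize (Hw x (Hin x ltac:(lra))). lra.
- rewrite !clamp_id, (RInt_clamp R0 (fun t => h t ^ (N - 1) * f t)) by lra.
  exact (Hflux r r0 (Hin r Hr) (Hin r0 ltac:(lra)) Hlt).
- exact (Rminus_diag_uniq _ _ Hwr0).
Qed.
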